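(* Let $n\geq 1$. Among all topological trees with exactly $n$ leaves, the binary caterpillar $F_n$ has the greatest Matula number. Furthermore, $M(F_n)=q_n$, where the sequence $(q_k)_{k\geq1}$ is defined by $q_1=1$ and $q_k=2p_{q_{k-1}}$ for $k>1$.
   Context: Let $p_m$ denote the $m$-th prime number ($p_1=2,p_2=3,p_3=5,\ldots$). All trees are rooted. The branches of a rooted tree $T$ are the components (rooted at the children of the root) that remain after deleting the root of $T$ and its incident edges. The Matula number $M(T)$ of a rooted tree is defined recursively: $M(K_1)=1$ for the one-vertex tree, and if $T$ has branches $T_1,\ldots,T_r$ then $M(T)=p_{M(T_1)}\cdot p_{M(T_2)}\cdots p_{M(T_r)}$. A leaf is a vertex of outdegree $0$ (so the one-vertex tree has one leaf). A topological tree is a rooted tree with no vertex of outdegree $1$. A binary tree is a rooted tree in which every vertex has outdegree exactly $0$ or $2$. The binary caterpillar $F_n$ is the binary tree with $n$ leaves whose internal (non-leaf) vertices all lie on a single path starting at the root; equivalently $F_1=K_1$ and for $n>1$, $F_n$ has the two branches $K_1$ and $F_{n-1}$. *)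

From mathcomp Require Import all_boot.
Set Implicit Arguments. Unset Strict Implicit. Unset Printing Implicit Defensive.

Lemma exists_prime_above (n : nat) : exists p, (n < p) && prime p.
Proof. by have [p Hp Pp] := prime_above n; exists p; rewrite Hp Pp. Qed.

Definition next_prime (n : nat) : nat := ex_minn (exists_prime_above n).

(* p_m, the m-th prime (1-indexed): p_1 = 2, p_2 = 3, ...  (p_0 = 1, unused) *)
Definition nth_prime (m : nat) : nat := iter m next_prime 1.

(* Rooted (unordered) trees: a node with its list of branches.
   The order of branches is irrelevant for every notion below. *)
Inductive tree : Type := Node of seq tree.

Definition K1 : tree := Node [::].

Fixpoint matula (t : tree) : nat :=
  let: Node ts := t in foldr (fun b acc => nth_prime (matula b) * acc) 1 ts.

Fixpoint leaves (t : tree) : nat :=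
  let: Node ts := t in
  if ts is [::] then 1 else foldr (fun b acc => leaves b + acc) 0 ts.

Fixpoint topological (t : tree) : bool :=
  let: Node ts := t in (size ts != 1) && foldr (fun b acc => topological b && acc) true ts.

Fixpoint binary (t : tree) : bool :=
  let: Node ts := t in
  ((size ts == 0) || (size ts == 2)) && foldr (fun b acc => binary b && acc) true ts.

(* binary caterpillar F_n: F_1 = K1, F_n has branches K1 and F_(n-1).
   (F_0 := K1 is a dummy value.) *)
Fixpoint caterpillar (n : nat) : tree :=
  match n with
  | 0 => K1
  | m.+1 => if m is 0 then K1 else Node [:: K1; caterpillar m]
  end.

(* q_1 = 1, q_k = 2 p_(q_(k-1)) for k > 1.  (q_0 := 1 is a dummy value.) *)
Fixpoint qseq (k : nat) : nat :=
  match k with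
  | 0 => 1
  | m.+1 => if m is 0 then 1 else 2 * nth_prime (qseq m)
  end.

(* Induction on the tree reduces everything to p_(q_a) p_(q_b) <= q_(a+b) for a, b >= 1,
   i.e. to q_(a+1) q_(b+1) <= 4 q_(a+b), since q_(k+1) = 2 p_(q_k).  This asks the growth
   factors q_(k+1) / q_k to increase fast enough, which follows from Chebyshev-type bounds
   proved from scratch: Erdos' primorial bound gives t (x - 2^t) <= 2 p_x for every t, and
   the central binomial coefficient gives p_N <= s (N+1) + 1 whenever s (N+1) + 2 <= 2^s.
   Taking t = lg Y - lg lg Y - 1 gives a map F with q_(k+1) / q_k >= F(Y) / Y for every
   Y <= q_k (as t (x - 2^t) / x increases with x), hence q_(j+i) / q_j >= F^i(X) / X whenever
   X <= q_j.  For X_i = F^i(q_5) this turns the case b = c + 4 into q_(c+5) X_c <= 4 X_(2c+3),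
   which is checked numerically for c <= 14 (bounding q from above by the upper estimate) and
   propagated to all larger c together with q_(c+5)^9 <= X_(2c+3)^5.  The cases b <= 3 are
   direct. *)

From mathcomp Require Import all_boot zify ring.
From Stdlib Require Import BinNums.
From Stdlib Require BinNat Nnat List.
Set Implicit Arguments. Unset Strict Implicit. Unset Printing Implicit Defensive.

Lemma next_primeP n :
  [/\ n < next_prime n, prime (next_prime n) &
      forall k, n < k < next_prime n -> ~~ prime k].
Proof.
rewrite /next_prime; case: ex_minnP => m /andP[ltnm pr_m] min_m; split=> // k /andP[ltnk ltkm].
by apply/negP=> pr_k; have := min_m k; rewrite ltnk pr_k => /(_ isT); rewrite leqNgt ltkm.
Qed.

Lemma nth_primeS k : nth_prime k.+1 = next_prime (nth_prime k).
Proof. exact: iterS. Qed.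

Lemma prime_nth_prime k : 0 < k -> prime (nth_prime k).
Proof. by case: k => // k _; rewrite nth_primeS; case: (next_primeP (nth_prime k)). Qed.

Lemma nth_prime_ltnS k : nth_prime k < nth_prime k.+1.
Proof. by rewrite nth_primeS; case: (next_primeP (nth_prime k)). Qed.

Lemma ltn_nth_prime : {homo nth_prime : m n / m < n}.
Proof. exact: (@homo_ltn _ _ (fun m n => m < n) ltn_trans nth_prime_ltnS). Qed.

Lemma leq_nth_prime : {homo nth_prime : m n / m <= n}.
Proof.
move=> m n; apply: (@homo_leq _ _ (fun m n => m <= n) leqnn leq_trans) => k.
exact: ltnW (nth_prime_ltnS k).
Qed.

Lemma ltn_nth_prime_id k : k < nth_prime k.
Proof. by elim: k => // k IHk; apply: leq_ltn_trans IHk (nth_prime_ltnS k). Qed.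

Definition prime_pi (y : nat) : nat := count prime (iota 0 y.+1).

Lemma prime_piS n : prime_pi n.+1 = prime_pi n + prime n.+1.
Proof. by rewrite /prime_pi -addn1 iotaD count_cat /= addn0. Qed.

Lemma leq_prime_pi : {homo prime_pi : m n / m <= n}.
Proof.
move=> m n; apply: (@homo_leq _ _ (fun m n => m <= n) leqnn leq_trans) => k.
by rewrite prime_piS leq_addr.
Qed.

Lemma prime_pi_leq n : prime_pi n <= n.
Proof.
elim: n => // n IHn; rewrite prime_piS.
by case: n IHn => [|n] IHn; case: prime => /=; lia.
Qed.

Lemma prime_pi_prime p : prime p -> prime_pi p = (prime_pi p.-1).+1.
Proof.
move=> pr_p; have p_gt0 := prime_gt0 pr_p.
by rewrite -(prednK p_gt0) prime_piS prednK // pr_p addn1.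
Qed.

Lemma prime_pi_next n : prime_pi (next_prime n) = (prime_pi n).+1.
Proof.
have [ltn_np pr_np no_prime] := next_primeP n.
have flat j : n + j < next_prime n -> prime_pi (n + j) = prime_pi n.
  elim: j => [|j IHj] lt_j; first by rewrite addn0.
  have npr : ~~ prime (n + j).+1 by apply: no_prime; lia.
  by rewrite addnS prime_piS (negbTE npr) addn0 IHj //; lia.
rewrite prime_pi_prime //; congr _.+1.
by rewrite -(subnKC (_ : n <= (next_prime n).-1)) ?flat //; lia.
Qed.

Lemma prime_pi_nth k : prime_pi (nth_prime k) = k.
Proof. by elim: k => // k IHk; rewrite nth_primeS prime_pi_next IHk. Qed.

Lemma nth_prime_leq k y : 0 < k -> k <= prime_pi y -> nth_prime k <= y.
Proof.
move=> k_gt0 le_k; rewrite leqNgt; apply/negP=> lt_y.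
have : prime_pi y <= prime_pi (nth_prime k).-1 by apply: leq_prime_pi; lia.
by have := prime_pi_prime (prime_nth_prime k_gt0); rewrite prime_pi_nth; lia.
Qed.

Lemma nth_prime_pi p : prime p -> nth_prime (prime_pi p) = p.
Proof.
move=> pr_p; have pi_gt0 : 0 < prime_pi p by rewrite prime_pi_prime.
apply/eqP; rewrite eqn_leq nth_prime_leq //=; rewrite leqNgt; apply/negP=> lt_p.
have : prime_pi (nth_prime (prime_pi p)) <= prime_pi p.-1 by apply: leq_prime_pi; lia.
by rewrite prime_pi_nth (prime_pi_prime pr_p); lia.
Qed.

Lemma nth_prime1 : nth_prime 1 = 2.
Proof. exact: (nth_prime_pi (isT : prime 2)). Qed.

Lemma odd_nth_prime k : 1 < k -> odd (nth_prime k).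
Proof.
move=> lt1k; have /primeP[_ dvd_p] := prime_nth_prime (ltnW lt1k).
have := ltn_nth_prime lt1k; rewrite nth_prime1.
case odd_p: (odd _) => // lt2p; have := dvd_p 2; rewrite dvdn2 odd_p => /(_ isT).
by case/orP=> /eqP; lia.
Qed.

Lemma double_leq_nth_prime k : k.*2 <= (nth_prime k).+1.
Proof.
elim: k => // k IHk; have lt_k := nth_prime_ltnS k.
case: (ltnP k 2) => [|le2k].
  by case: k IHk lt_k => [|[|]] // _; rewrite nth_prime1.
have odd_k := odd_nth_prime le2k.
have odd_k1 := odd_nth_prime (leq_trans le2k (leqnSn k)).
have : nth_prime k.+1 != (nth_prime k).+1.
  by apply: contraTneq odd_k1 => ->; rewrite /= odd_k.
lia.
Qed.

Lemma binom_odd_leq m : 'C(m.*2.+1, m) <= 4 ^ m.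
Proof.
set n := m.*2.+1.
have sum2n : \sum_(0 <= i < n.+1) 'C(n, i) = 2 ^ n.
  rewrite (_ : 2 ^ n = (1 + 1) ^ n) // expnDn big_mkord; apply: eq_bigr => i _.
  by rewrite !exp1n !muln1.
have two_terms : 'C(n, m) + 'C(n, m.+1) <= 2 ^ n.
  have le_mn : m <= n.+1 by rewrite /n; lia.
  have lt_mn : m < n.+1 by rewrite /n; lia.
  have lt_m1n : m.+1 < n.+1 by rewrite /n; lia.
  rewrite -sum2n (@big_cat_nat _ _ _ m _ _ _ _ (leq0n m) le_mn) /=.
  rewrite (big_ltn lt_mn) (big_ltn lt_m1n).
  apply: leq_trans (leq_addl _ _); rewrite addnA; exact: leq_addr.
have sym : 'C(n, m.+1) = 'C(n, m).
  by rewrite -bin_sub /n; [congr 'C(_, _) | ]; lia.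
have four : 2 ^ n = 2 * 4 ^ m by rewrite /n expnS -mul2n expnM.
by move: two_terms; rewrite sym addnn four -mul2n leq_pmul2l.
Qed.

Lemma prod_uniq_primes_dvdn (s : seq nat) c :
  uniq s -> all prime s -> all (dvdn^~ c) s -> \prod_(p <- s) p %| c.
Proof.
elim: s => [|p s IHs]; first by rewrite big_nil dvd1n.
rewrite /= => /andP[p_notin_s uniq_s] /andP[pr_p pr_s] /andP[p_dvd s_dvd].
have coprime_p : coprime p (\prod_(q <- s) q).
  rewrite prime_coprime // Euclid_dvd_prod // big_has; apply/hasPn=> q q_in_s /=.
  rewrite dvdn_prime2 //; last exact: (allP pr_s).
  by apply/eqP=> pq; rewrite pq q_in_s in p_notin_s.
by rewrite big_cons Gauss_dvd // p_dvd IHs.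
Qed.

Lemma prime_dvdn_fact p k : prime p -> (p %| k`!) = (p <= k).
Proof.
move=> pr_p; apply/idP/idP => [|le_pk]; last by rewrite dvdn_fact // prime_gt0.
elim: k => [|k IHk]; first by rewrite dvdn1; case: eqP pr_p => // ->.
by rewrite factS Euclid_dvdM // => /orP[/dvdn_leq-> //| /IHk]; lia.
Qed.

Definition primorial n := \prod_(0 <= p < n.+1 | prime p) p.

Lemma primorial_upper_dvd_binom m :
  \prod_(m.+2 <= p < m.*2.+2 | prime p) p %| 'C(m.*2.+1, m).
Proof.
rewrite -big_filter; apply: prod_uniq_primes_dvdn.
- exact/filter_uniq/iota_uniq.
- by apply/allP=> p; rewrite mem_filter => /andP[].
apply/allP=> p; rewrite mem_filter mem_index_iota => /andP[pr_p /andP[lt_mp le_p]].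
have fact_eq : 'C(m.*2.+1, m) * (m`! * m.+1`!) = (m.*2.+1)`!.
  by have := @bin_fact m.*2.+1 m; rewrite (_ : m.*2.+1 - m = m.+1); [apply; lia | lia].
have : p %| 'C(m.*2.+1, m) * (m`! * m.+1`!) by rewrite fact_eq prime_dvdn_fact //; lia.
rewrite !Euclid_dvdM // !prime_dvdn_fact //.
by case/or4P => // [|/(dvdn_leq (ltn0Sn m))|]; lia.
Qed.

Lemma primorial_leq n : primorial n <= 4 ^ n.
Proof.
elim/ltn_ind: n => n IHn.
case: (ltnP n 3) => [|le3n].
  by case: n {IHn} => [|[|[|]]] //; rewrite /primorial unlock.
have [odd_n | even_n] := boolP (odd n).
  set m := n./2; have n_eq : n = m.*2.+1 by rewrite -[LHS]odd_double_half odd_n.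
  rewrite n_eq /primorial (@big_cat_nat _ _ _ m.+2) //=; try lia.
  apply: (@leq_trans (4 ^ m.+1 * 'C(m.*2.+1, m))).
    apply: leq_mul; first by apply: IHn; lia.
    by apply: dvdn_leq; [rewrite bin_gt0; lia | exact: primorial_upper_dvd_binom].
  have -> : 4 ^ m.*2.+1 = 4 ^ m.+1 * 4 ^ m by rewrite -expnD; congr (_ ^ _); lia.
  by rewrite leq_mul2l binom_odd_leq orbT.
have not_prime : ~~ prime n.
  apply/negP=> /primeP[_ /(_ 2)]; rewrite dvdn2 even_n => /(_ isT).
  by case/orP=> /eqP; lia.
have n_gt0 : 0 < n by lia.
have -> : primorial n = primorial n.-1.
  rewrite /primorial -{1}(prednK n_gt0) big_mkcond big_nat_recr //= -big_mkcond.
  by rewrite prednK // (negbTE not_prime) muln1.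
by apply: leq_trans (IHn n.-1 _) _; rewrite ?leq_exp2l //; lia.
Qed.

Lemma prod_primes_gt0 m n : 0 < \prod_(m <= p < n | prime p) p.
Proof. by rewrite big_seq_cond prodn_cond_gt0 // => p /andP[_ /prime_gt0]. Qed.

Lemma expn_prime_pi_leq_prod a y :
  a ^ (prime_pi y - prime_pi a) <= \prod_(a.+1 <= p < y.+1 | prime p) p.
Proof.
elim: y => [|y IHy]; first by rewrite sub0n prod_primes_gt0.
case: (ltnP y a) => [lt_ya | le_ay].
  by rewrite (_ : _ - _ = 0) ?prod_primes_gt0 //; apply/eqP; rewrite subn_eq0 leq_prime_pi.
rewrite big_mkcond big_nat_recr //= -big_mkcond prime_piS.
case pr_y: (prime y.+1); last by rewrite addn0 muln1.
rewrite addn1 subSn ?leq_prime_pi // expnS mulnC leq_mul //.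
by rewrite ltnW.
Qed.

Lemma nth_prime_lower t x : t * (x - 2 ^ t) <= 2 * nth_prime x.
Proof.
case: t => [|t]; first by rewrite mul0n.
rewrite -(leq_exp2l _ _ (isT : 1 < 2)) !expnM.
apply: leq_trans (primorial_leq (nth_prime x)).
apply: (@leq_trans ((2 ^ t.+1) ^ (prime_pi (nth_prime x) - prime_pi (2 ^ t.+1)))).
  by rewrite leq_pexp2l ?expn_gt0 // prime_pi_nth leq_sub2l // prime_pi_leq.
apply: leq_trans (expn_prime_pi_leq_prod _ _) _.
case: (ltnP (nth_prime x) (2 ^ t.+1)) => [lt_x | le_x].
  by rewrite big_geq ?ltnS ?(ltnW lt_x) // /primorial prod_primes_gt0.
rewrite /primorial [X in _ <= X](@big_cat_nat _ _ _ (2 ^ t.+1).+1) //=.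
exact: leq_pmull (prod_primes_gt0 _ _).
Qed.

Lemma central_binomS n :
  'C(n.+1.*2, n.+1) * (n.+1 * n.+1) = 'C(n.*2, n) * (n.*2.+2 * n.*2.+1).
Proof.
have diag := mul_bin_diag n.*2.+2 n; have down := mul_bin_down n.*2.+1 n.
rewrite /= (_ : n.*2.+1 - n = n.+1) in down; last by lia.
rewrite doubleS; transitivity (n.+1 * (n.+1 * 'C(n.*2.+2, n.+1))); first by ring.
rewrite -diag; transitivity (n.*2.+2 * (n.+1 * 'C(n.*2.+1, n))); first by ring.
by rewrite -down; ring.
Qed.

Lemma central_binom_lower n : 4 ^ n <= n.*2.+1 * 'C(n.*2, n).
Proof.
elim: n => [|n IHn]; first by rewrite bin0.
rewrite -(@leq_pmul2r (n.+1 * n.+1)) // -mulnA central_binomS.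
have -> : 4 ^ n.+1 * (n.+1 * n.+1) = 4 ^ n * (4 * (n.+1 * n.+1)) by rewrite expnS; ring.
have -> : n.+1.*2.+1 * ('C(n.*2, n) * (n.*2.+2 * n.*2.+1))
  = n.*2.+1 * 'C(n.*2, n) * (n.+1.*2.+1 * n.*2.+2) by ring.
by apply: leq_mul IHn _; rewrite !doubleS; nia.
Qed.

Lemma divn_double_leq a q : 0 < q -> a.*2 %/ q <= (a %/ q).*2 + (q <= a.*2).
Proof.
move=> q_gt0; case: (leqP q a.*2) => [le_q | lt_q]; last by rewrite divn_small.
rewrite addn1 -ltnS ltn_divLR //; have := ltn_ceil a q_gt0; rewrite mulSn; lia.
Qed.

Lemma sum_indicator_leq M T : \sum_(1 <= k < M) (k <= T) <= T.
Proof.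
suff : \sum_(1 <= k < M) (k <= T) <= minn M.-1 T by move/leq_trans; apply; exact: geq_minr.
elim: M => [|[|M] IHM]; [by rewrite big_geq | by rewrite big_geq |].
by rewrite big_nat_recr //=; case: (leqP M.+1 T) => ?; lia.
Qed.

Lemma logn_central_binom p n : prime p -> logn p 'C(n.*2, n) <= trunc_log p n.*2.
Proof.
move=> pr_p; have p_gt1 := prime_gt1 pr_p; have p_gt0 := prime_gt0 pr_p.
have fact_eq : 'C(n.*2, n) * (n`! * n`!) = (n.*2)`!.
  by have := @bin_fact n.*2 n; rewrite (_ : n.*2 - n = n); [apply; lia | lia].
have logn_fact2 : logn p (n.*2)`! = logn p 'C(n.*2, n) + (logn p n`!).*2.
  by rewrite -fact_eq !lognM ?muln_gt0 ?fact_gt0 ?bin_gt0 ?addnn //; lia.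
have logn_fact_wide : logn p n`! = \sum_(1 <= k < n.*2.+1) n %/ p ^ k.
  rewrite logn_fact //; case: n {fact_eq logn_fact2} => [|n]; first by rewrite !big_geq.
  rewrite [RHS](@big_cat_nat _ _ _ n.+2) //=; last by lia.
  rewrite [X in _ = _ + X]big1_seq ?addn0 // => k /andP[_].
  rewrite mem_index_iota => /andP[le_k _]; apply: divn_small.
  by apply: leq_trans (ltn_expl _ p_gt1) _; rewrite leq_exp2l //; lia.
set T := trunc_log p n.*2.
have termwise : \sum_(1 <= k < n.*2.+1) n.*2 %/ p ^ k <=
                \sum_(1 <= k < n.*2.+1) (2 * (n %/ p ^ k) + (k <= T)).
  apply: leq_sum => k _; have pk_gt0 : 0 < p ^ k by rewrite expn_gt0 p_gt0.
  rewrite mul2n; apply: leq_trans (divn_double_leq _ pk_gt0) _; rewrite leq_add2l.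
  by case: (leqP (p ^ k) n.*2) => // /(trunc_log_max p_gt1) ->.
rewrite big_split /= -big_distrr /= -logn_fact_wide -logn_fact // in termwise.
have := sum_indicator_leq n.*2.+1 T; lia.
Qed.

Lemma central_binom_upper n : 0 < n -> 'C(n.*2, n) <= n.*2 ^ prime_pi n.*2.
Proof.
move=> n_gt0; set C := 'C(n.*2, n); have C_gt0 : 0 < C by rewrite bin_gt0; lia.
have C_dvd : C %| (n.*2)`!.
  apply/dvdnP; exists (n`! * n`!); rewrite /C mulnC.
  by have := @bin_fact n.*2 n; rewrite (_ : n.*2 - n = n); [move=> <-; lia | lia].
have small_primes p : p \in primes C -> prime p /\ p <= n.*2.
  rewrite mem_primes => /and3P[pr_p _ p_dvd]; split=> //.
  by rewrite -prime_dvdn_fact // (dvdn_trans p_dvd C_dvd).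
rewrite {1}(prod_prime_decomp C_gt0) prime_decompE big_map /=.
apply: (@leq_trans (\prod_(p <- primes C) n.*2)).
  rewrite big_seq [X in _ <= X]big_seq; apply: leq_prod => p /small_primes[pr_p le_p].
  apply: (@leq_trans (p ^ trunc_log p n.*2)).
    by rewrite leq_exp2l ?prime_gt1 // logn_central_binom.
  by apply: trunc_logP; [exact: prime_gt1 | lia].
rewrite big_const_seq count_predT iter_muln_1 leq_pexp2l //; first by lia.
rewrite /prime_pi -size_filter; apply: uniq_leq_size; first exact: primes_uniq.
by move=> p /small_primes[pr_p le_p]; rewrite mem_filter pr_p mem_iota; lia.
Qed.

Lemma nth_prime_upper s N :
  0 < N -> s * N.+1 + 2 <= 2 ^ s -> nth_prime N <= s * N.+1 + 1.
Proof.
move=> N_gt0 le_s; set M := s * N.+1.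
have s_gt0 : 0 < s by case: s le_s {M} => //; rewrite mul0n.
have le_sM : s <= M by rewrite /M leq_pmulr.
set n := M.+1./2.
have n_bounds : M <= n.*2 <= M.+1.
  by have := odd_double_half M.+1; rewrite -/n; case: (odd M.+1) => /=; lia.
have n_gt0 : 0 < n by lia.
have pow_bound : 2 ^ n.*2 <= 2 ^ (s * (prime_pi n.*2).+1).
  have -> : 2 ^ n.*2 = 4 ^ n by rewrite -mul2n expnM.
  rewrite mulnS expnD expnM.
  apply: leq_trans (central_binom_lower n) _; apply: leq_mul; first by lia.
  apply: leq_trans (central_binom_upper n_gt0) _.
  by case: (prime_pi n.*2) => [|k]; rewrite ?expn0 // leq_exp2r //; lia.
rewrite leq_exp2l // in pow_bound.
have le_N : N <= prime_pi n.*2.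
  by rewrite -ltnS -(ltn_pmul2l s_gt0); lia.
by apply: leq_trans (nth_prime_leq N_gt0 le_N) _; lia.
Qed.

Local Notation lg := (trunc_log 2).

Lemma lg_bounds n : 0 < n -> 2 ^ lg n <= n < 2 ^ (lg n).+1.
Proof. by move=> n_gt0; rewrite trunc_logP ?trunc_log_ltn. Qed.

Lemma lg_ltn_exp n k : 0 < n -> n < 2 ^ k -> lg n < k.
Proof.
move=> n_gt0 lt_n; rewrite -(ltn_exp2l _ _ (isT : 1 < 2)).
by apply: leq_ltn_trans lt_n; rewrite trunc_logP.
Qed.

Lemma lg_ltn n : 0 < n -> lg n < n.
Proof. by move=> n_gt0; apply: lg_ltn_exp => //; apply: ltn_expl. Qed.

Lemma lg_addn m k : 0 < m -> lg (m + k) <= lg m + k.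
Proof.
move=> m_gt0; rewrite -ltnS; apply: lg_ltn_exp; first by rewrite ltn_addr.
rewrite -[(lg m + k).+1]addSn expnD.
have := trunc_log_ltn m (isT : 1 < 2); have := ltn_expl k (isT : 1 < 2).
have : 0 < 2 ^ (lg m).+1 by rewrite expn_gt0.
nia.
Qed.

Lemma leq_sub_lg m n : 0 < m -> m <= n -> m - lg m <= n - lg n.
Proof.
move=> m_gt0 le_mn; have := lg_addn (n - m) m_gt0; rewrite subnKC //.
have := lg_ltn m_gt0; have := lg_ltn (leq_trans m_gt0 le_mn); lia.
Qed.

Lemma linear_leq_exp2 k : 7 <= k -> 9 * k + 16 <= 2 ^ k.
Proof.
elim: k => // k IHk; rewrite leq_eqVlt => /orP[/eqP <- // | lt7k].
by rewrite expnS; have := IHk lt7k; lia.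
Qed.

Lemma lg_linear m : 70 <= m -> 9 * lg m + 16 <= m.
Proof.
move=> le70m; case: (ltnP (lg m) 7) => [lt_lg | le7lg]; first by lia.
by apply: leq_trans (linear_leq_exp2 le7lg) (trunc_logP _ _); lia.
Qed.

(* [nth_prime_lower] with t := lower_exp X gives lower_step X <= 2 p_X; this t makes 2 ^ t
   about X / (2 lg X), so lower_step X is about X (lg X - lg lg X).  Dually, [nth_prime_upper]
   with s := upper_exp Y gives 2 p_Y <= upper_step Y. *)
Definition lower_exp X := lg X - lg (lg X) - 1.
Definition lower_step X := lower_exp X * (X - 2 ^ lower_exp X).

Definition upper_exp Y := lg Y + lg (lg Y) + 3.
Definition upper_step Y := 2 * (upper_exp Y * Y.+1 + 1).

Lemma upper_exp_valid Y : 4 <= Y -> upper_exp Y * Y.+1 + 2 <= 2 ^ upper_exp Y.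
Proof.
move=> le4Y; rewrite /upper_exp; set l := lg Y; set t := lg l.
have le2l : 2 <= l by apply: trunc_log_max.
have le1t : 1 <= t by apply: trunc_log_max.
have /andP[_ ltY] := lg_bounds (leq_trans (isT : 0 < 4) le4Y).
have /andP[_ ltl] := lg_bounds (leq_trans (isT : 0 < 2) le2l).
have t3 : t + 3 <= 2 * 2 ^ t by have := ltn_expl t (isT : 1 < 2); lia.
rewrite -/l in ltY; rewrite -/t in ltl; rewrite !expnD !expnS in ltY ltl *.
nia.
Qed.

Lemma lower_exp_eq X : 2 <= lg X -> lower_exp X + lg (lg X) + 1 = lg X.
Proof. by move=> le2; have := lg_ltn (ltnW le2); rewrite /lower_exp; lia. Qed.

Lemma lower_step_leq X : lower_step X <= lg X * X.
Proof. by apply: leq_mul; [rewrite /lower_exp; lia | exact: leq_subr]. Qed.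

Lemma lower_step_ratio X :
  2 <= lg X -> lower_exp X * lg X * X <= (lg X).+1 * lower_step X.
Proof.
move=> le2; have T_eq := lower_exp_eq le2.
have X_gt0 : 0 < X by case: X le2 {T_eq}; rewrite ?trunc_log0.
have /andP[le_mX _] := lg_bounds X_gt0.
have /andP[_ lt_m] := lg_bounds (ltnW le2).
set m := lg X in le2 T_eq le_mX lt_m *; set T := lower_exp X in T_eq *.
have small_pow : m.+1 * 2 ^ T <= X.
  apply: leq_trans le_mX.
  have -> : 2 ^ m = 2 ^ T * 2 ^ (lg m).+1 by rewrite -expnD; congr (2 ^ _); lia.
  by rewrite mulnC leq_mul2l lt_m orbT.
rewrite /lower_step -/T; set P := 2 ^ T in small_pow *; nia.
Qed.

Lemma lower_step_geq X : 2 <= lg X -> (lower_exp X).-1 * X <= lower_step X.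
Proof.
move=> le2; have le_Tm : lower_exp X <= lg X by rewrite /lower_exp; lia.
have := lower_step_ratio le2.
set m := lg X in le_Tm *; set T := lower_exp X in le_Tm * => ratio.
rewrite -(@leq_pmul2l m.+1) //; apply: leq_trans ratio; rewrite mulnCA mulnA leq_mul2r.
by apply/orP; right; case: T le_Tm => [|T] le_Tm; nia.
Qed.

Lemma lg_add3_leq m : 8 <= m -> lg m + 3 <= m.
Proof.
move=> le8; have le3 : 3 <= lg m by apply: trunc_log_max.
have := trunc_logP (isT : 1 < 2) (leq_trans (isT : 0 < 8) le8).
rewrite -(subnKC le3) expnD; have := ltn_expl (lg m - 3) (isT : 1 < 2); lia.
Qed.

Lemma leq_lower_step X : 512 <= X -> X <= lower_step X.
Proof.
move=> le512; have le9 : 9 <= lg X by apply: trunc_log_max.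
apply: leq_trans (lower_step_geq (leq_trans _ le9)) => //; apply: leq_pmull.
have := lower_exp_eq (leq_trans (isT : 2 <= 9) le9).
have := lg_add3_leq (leq_trans _ le9); lia.
Qed.

Lemma leq_lower_exp X Y : 512 <= X -> X <= Y -> lower_exp X <= lower_exp Y.
Proof.
move=> le512 le_XY; have le9 : 9 <= lg X by apply: trunc_log_max.
have := leq_sub_lg (leq_trans _ le9) (leq_trunc_log 2 le_XY); rewrite /lower_exp; lia.
Qed.

Lemma lower_step2_ratio X : 512 <= X ->
  lower_exp X * lg X * (lower_exp X * lg X * X) <=
  (lg X).+1 * ((lg X).+1 * lower_step (lower_step X)).
Proof.
move=> le512; set Y := lower_step X; have le_XY : X <= Y := leq_lower_step le512.
have le9 : 9 <= lg X by apply: trunc_log_max.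
have le_lg : lg X <= lg Y := leq_trunc_log 2 le_XY.
have le_T : lower_exp X <= lower_exp Y := leq_lower_exp le512 le_XY.
have ratioX := lower_step_ratio (leq_trans (isT : 2 <= 9) le9).
have ratioY := lower_step_ratio (leq_trans (isT : 2 <= 9) (leq_trans le9 le_lg)).
rewrite -/Y in ratioX.
move: (lower_exp X) (lower_exp Y) (lg X) (lg Y) (lower_step Y) le_T le_lg ratioX ratioY
  => T TY m mY Z le_T le_lg ratioX ratioY.
have key : T * (m * mY.+1) <= TY * (mY * m.+1).
  by apply: leq_mul => //; rewrite !mulnS [mY * m]mulnC leq_add2r.
have ratioXY : T * m * Y * mY.+1 <= m.+1 * Z * mY.+1.
  have -> : T * m * Y * mY.+1 = T * (m * mY.+1) * Y by ring.
  apply: (@leq_trans (TY * (mY * m.+1) * Y)); first by rewrite leq_mul2r key orbT.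
  have -> : TY * (mY * m.+1) * Y = TY * mY * Y * m.+1 by ring.
  have -> : m.+1 * Z * mY.+1 = mY.+1 * Z * m.+1 by ring.
  by rewrite leq_mul2r ratioY orbT.
rewrite leq_pmul2r // in ratioXY.
apply: (@leq_trans (T * m * (m.+1 * Y))); first by rewrite leq_mul2l ratioX orbT.
by rewrite mulnCA leq_mul2l ratioXY orbT.
Qed.

Lemma lower_step2_geq X : 512 <= X ->
  (lower_exp X).-1 * (lower_exp X).-1 * X <= lower_step (lower_step X).
Proof.
move=> le512; set Y := lower_step X; have le_XY : X <= Y := leq_lower_step le512.
have le9 : 9 <= lg X by apply: trunc_log_max.
have le_T : lower_exp X <= lower_exp Y := leq_lower_exp le512 le_XY.
have le9Y : 9 <= lg Y := leq_trans le9 (leq_trunc_log 2 le_XY).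
apply: leq_trans (lower_step_geq (leq_trans _ le9Y)) => //.
rewrite -mulnA; apply: leq_mul; first by lia.
exact: lower_step_geq (leq_trans _ le9).
Qed.

Lemma upper_step_leq q : 128 <= q -> upper_step q <= q * (2 * upper_exp q + 1).
Proof.
move=> le128; have le7 : 7 <= lg q by apply: trunc_log_max.
have := linear_leq_exp2 le7.
have := trunc_logP (isT : 1 < 2) (leq_trans (isT : 0 < 128) le128).
have := lg_ltn (leq_trans (isT : 0 < 7) le7).
rewrite /upper_step /upper_exp; nia.
Qed.

Lemma lg_pow_leq q X : 0 < X -> q ^ 9 <= X ^ 5 -> 9 * lg q < 5 * (lg X).+1.
Proof.
move=> X_gt0; case: q => [|q] le_pow; first by rewrite trunc_log0.
rewrite -(ltn_exp2l _ _ (isT : 1 < 2)) mulnC [5 * _]mulnC !expnM.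
apply: leq_ltn_trans (leq_trans _ le_pow) _; first by rewrite leq_exp2r // trunc_logP.
by rewrite ltn_exp2r // trunc_log_ltn.
Qed.

Lemma exp_linear_bounds q X : 2 ^ 64 <= q -> 9 * lg q < 5 * (lg X).+1 ->
  [/\ 115 <= lg X, 9 * lg q <= 5 * lg X + 4,
      9 * (2 * upper_exp q + 1) <= 12 * lg X + 39 & 8 * lg X + 7 <= 9 * lower_exp X].
Proof.
move=> le_q lt_lg; have le64 : 64 <= lg q by apply: trunc_log_max.
have le_lgs : lg (lg q) <= lg (lg X) by apply: leq_trunc_log; lia.
have le115 : 115 <= lg X by lia.
have := lg_linear (leq_trans (isT : 70 <= 115) le115).
have := lg_ltn (leq_trans (isT : 0 < 115) le115).
by rewrite /upper_exp /lower_exp; split; lia.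
Qed.

Lemma quartic_leq m : 115 <= m ->
  (12 * m + 39) * (5 * m + 4) * (m.+1 * m.+1) <= (8 * m + 7) * (8 * m + 7) * (m * m).
Proof. by move=> le115; rewrite -(subnKC le115); nia. Qed.

Lemma upper_lower_exp_mul q X : 2 ^ 64 <= q -> 9 * lg q < 5 * (lg X).+1 ->
  (2 * upper_exp q + 1) * lg q * ((lg X).+1 * (lg X).+1) <=
  lower_exp X * lower_exp X * (lg X * lg X).
Proof.
move=> le_q lt_lg; have [le115 b_l b_U b_T] := exp_linear_bounds le_q lt_lg.
move: (2 * upper_exp q + 1) (lg q) (lg X) (lower_exp X) le115 b_l b_U b_T {le_q lt_lg}
  => U l m T le115 b_l b_U b_T.
rewrite -(@leq_pmul2l 81) //.
have -> : 81 * (U * l * (m.+1 * m.+1)) = 9 * U * (9 * l) * (m.+1 * m.+1) by ring.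
have -> : 81 * (T * T * (m * m)) = 9 * T * (9 * T) * (m * m) by ring.
apply: (@leq_trans ((12 * m + 39) * (5 * m + 4) * (m.+1 * m.+1))).
  by apply: leq_mul => //; apply: leq_mul.
apply: leq_trans (quartic_leq le115) _.
by apply: leq_mul => //; apply: leq_mul.
Qed.

Lemma expn9_leq_expn10 U A : 3 * U <= 5 * A -> 100 <= A -> U ^ 9 <= A ^ 10.
Proof.
move=> le_UA le100; have pow3_gt0 : 0 < 3 ^ 9 by rewrite expn_gt0.
rewrite -(leq_pmul2l pow3_gt0) -expnMn.
apply: leq_trans (_ : (5 * A) ^ 9 <= _); first by rewrite leq_exp2r.
rewrite expnMn [A ^ 10]expnS mulnA leq_mul2r; apply/orP; right.
by apply: leq_trans (leq_mul (leqnn (3 ^ 9)) le100); lia.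
Qed.

Lemma upper_lower_exp_pow q X : 2 ^ 64 <= q -> 9 * lg q < 5 * (lg X).+1 ->
  (2 * upper_exp q + 1) ^ 9 <= (lower_exp X).-1 ^ 10.
Proof.
move=> le_q lt_lg; have [le115 _ b_U b_T] := exp_linear_bounds le_q lt_lg.
by apply: expn9_leq_expn10; lia.
Qed.

(* One step c -> c + 1 of [lower_invariant], with q = q_(c+5), X = X_c, Xa = X_(2c+3) and
   q' = q_(c+6).  Going from q * X to q' * lower_step X costs a factor about 2 (lg q)^2, and
   two steps from Xa gain about (lg Xa)^2; q ^ 9 <= Xa ^ 5 makes lg q < 5/9 (lg Xa + 1). *)
Section LowerPairStep.

Variables q X Xa q' : nat.
Hypotheses (le_Xq : X <= q) (le64 : 2 ^ 64 <= X) (mul_le : q * X <= 4 * Xa)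
  (pow_le : q ^ 9 <= Xa ^ 5) (le_q' : q' <= upper_step q).

Let le64q : 2 ^ 64 <= q := leq_trans le64 le_Xq.

Let Xa_gt0 : 0 < Xa.
Proof. by case: Xa pow_le => //; rewrite exp0n // leqn0 expn_eq0; case: q le64q. Qed.

Let lt_lg : 9 * lg q < 5 * (lg Xa).+1 := lg_pow_leq Xa_gt0 pow_le.

Let le512 : 512 <= Xa.
Proof.
have [le115 _ _ _] := exp_linear_bounds le64q lt_lg.
apply: leq_trans (_ : 2 ^ 9 <= _) (trunc_logP (isT : 1 < 2) Xa_gt0) => //.
by rewrite leq_exp2l //; lia.
Qed.

Let le_q'U : q' <= q * (2 * upper_exp q + 1).
Proof. by apply: leq_trans le_q' (upper_step_leq (leq_trans _ le64q)). Qed.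

Lemma lower_pair_step_mul : q' * lower_step X <= 4 * lower_step (lower_step Xa).
Proof.
set U := 2 * upper_exp q + 1; set m := lg Xa; set T := lower_exp Xa.
have le_FX : lower_step X <= lg q * X.
  by apply: leq_trans (lower_step_leq X) _; rewrite leq_mul2r leq_trunc_log ?orbT.
have exps : U * lg q * (m.+1 * m.+1) <= T * T * (m * m) := upper_lower_exp_mul le64q lt_lg.
have ratio := lower_step2_ratio le512; rewrite -/m -/T in ratio.
apply: (@leq_trans (U * lg q * (4 * Xa))).
  apply: (@leq_trans (q * U * (lg q * X))); first exact: leq_mul le_q'U le_FX.
  have -> : q * U * (lg q * X) = U * lg q * (q * X) by ring.
  by rewrite leq_mul2l mul_le orbT.
rewrite mulnCA leq_mul2l; apply/orP; right.
have step : U * lg q * Xa * (m.+1 * m.+1) <= T * m * (T * m * Xa).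
  have -> : U * lg q * Xa * (m.+1 * m.+1) = U * lg q * (m.+1 * m.+1) * Xa by ring.
  have -> : T * m * (T * m * Xa) = T * T * (m * m) * Xa by ring.
  by rewrite leq_mul2r exps orbT.
rewrite -(@leq_pmul2r (m.+1 * m.+1)) //; apply: leq_trans step (leq_trans ratio _).
by rewrite mulnA mulnC.
Qed.

Lemma lower_pair_step_pow : q' ^ 9 <= lower_step (lower_step Xa) ^ 5.
Proof.
set T := lower_exp Xa.
apply: leq_trans (_ : (q * (2 * upper_exp q + 1)) ^ 9 <= _); first by rewrite leq_exp2r.
apply: (@leq_trans (Xa ^ 5 * T.-1 ^ 10)).
  by rewrite expnMn leq_mul // upper_lower_exp_pow.
apply: leq_trans (_ : (T.-1 * T.-1 * Xa) ^ 5 <= _); last first.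
  by rewrite leq_exp2r // lower_step2_geq.
by rewrite !expnMn -expnD mulnC.
Qed.

End LowerPairStep.

Lemma qseqSS k : qseq k.+2 = 2 * nth_prime (qseq k.+1).
Proof. by []. Qed.

Lemma qseq2 : qseq 2 = 4.
Proof. by rewrite qseqSS nth_prime1. Qed.

Lemma qseq3 : qseq 3 = 14.
Proof. by rewrite qseqSS qseq2 (nth_prime_pi (isT : prime 7)). Qed.

Lemma qseq4 : qseq 4 = 86.
Proof. by rewrite qseqSS qseq3 (nth_prime_pi (isT : prime 43)). Qed.

Lemma qseq5 : qseq 5 = 886.
Proof. by rewrite qseqSS qseq4 (nth_prime_pi (isT : prime 443)). Qed.

Lemma leq_qseq : {homo qseq : m n / m <= n}.
Proof.
move=> m n; apply: (@homo_leq _ _ (fun m n => m <= n) leqnn leq_trans) => -[//|[|k]].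
  by rewrite qseq2.
by rewrite [qseq k.+3]qseqSS; have := ltn_nth_prime_id (qseq k.+2); lia.
Qed.

Lemma lower_step_leq_qseqS k X : 0 < k -> X <= qseq k -> lower_step X <= qseq k.+1.
Proof.
case: k => // k _ le_X; rewrite qseqSS; apply: leq_trans (nth_prime_lower (lower_exp X) _).
by rewrite leq_mul2l leq_sub2r ?orbT.
Qed.

Lemma double_nth_prime_leq_upper_step Y : 4 <= Y -> 2 * nth_prime Y <= upper_step Y.
Proof.
move=> le4; rewrite leq_mul2l; apply/orP; right.
by apply: nth_prime_upper; [lia | exact: upper_exp_valid].
Qed.

Definition lower_seq i := iter i lower_step 886.
Definition upper_seq i := iter i upper_step 886.

Lemma lower_seq_ge i : 886 <= lower_seq i.
Proof.
elim: i => // i IHi; rewrite /lower_seq iterS.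
exact: leq_trans IHi (leq_lower_step (leq_trans _ IHi)).
Qed.

Lemma lower_seq_leq_qseq i : lower_seq i <= qseq (i + 5).
Proof.
elim: i => [|i IHi]; first by rewrite qseq5.
by rewrite /lower_seq iterS addSn; apply: lower_step_leq_qseqS; rewrite ?addn_gt0 ?orbT.
Qed.

Lemma qseq_leq_upper_seq i : qseq (i + 5) <= upper_seq i.
Proof.
elim: i => [|i IHi]; first by rewrite qseq5.
have le4 : 4 <= qseq (i + 5) by rewrite (leq_trans _ (leq_qseq (leq_addl i 5))) ?qseq5.
rewrite /upper_seq iterS -/(upper_seq i) addSn addnS qseqSS -addnS.
apply: leq_trans (double_nth_prime_leq_upper_step (leq_trans le4 IHi)).
by rewrite leq_mul2l leq_nth_prime.
Qed.

Lemma qseq_lower_ratio j X i : 0 < j -> X <= qseq j ->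
  qseq j * iter i lower_step X <= qseq (j + i) * X.
Proof.
move=> j_gt0 le_X; elim: i => [|i IHi]; first by rewrite addn0 mulnC.
rewrite iterS addnS; set Xi := iter i lower_step X; set Q := qseq (j + i).
set T := lower_exp Xi.
have -> : qseq (j + i).+1 = 2 * nth_prime Q by rewrite /Q -(prednK (ltn_addr i j_gt0)).
apply: (@leq_trans (T * (Q - 2 ^ T) * X)); last by rewrite leq_mul2r nth_prime_lower orbT.
rewrite /lower_step -/T mulnCA -mulnA [_ * X]mulnC leq_mul2l; apply/orP; right.
by rewrite !mulnBr [X * Q]mulnC leq_sub // leq_mul2r le_X orbT.
Qed.

Lemma qseq_mul_leq_of_lower_gap a c : c + 4 <= a ->
  qseq (c + 5) * lower_seq c <= 4 * lower_seq c.*2.+3 ->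
  qseq a.+1 * qseq (c + 5) <= 4 * qseq (a + c + 4).
Proof.
move=> le_ca gap; have X_gt0 : 0 < lower_seq c by apply: leq_trans (lower_seq_ge c).
have le_X : lower_seq c <= qseq a.+1.
  by apply: leq_trans (lower_seq_leq_qseq c) (leq_qseq _); lia.
have ratio := qseq_lower_ratio (c + 3) (ltn0Sn a) le_X.
rewrite /lower_seq -iterD -/(lower_seq _) (_ : c + 3 + c = c.*2.+3) in ratio; last by lia.
rewrite (_ : a.+1 + (c + 3) = a + c + 4) in ratio; last by lia.
rewrite -(leq_pmul2r X_gt0) -mulnA.
apply: (@leq_trans (qseq a.+1 * (4 * lower_seq c.*2.+3))); first by rewrite leq_mul2l gap orbT.
by rewrite mulnCA -[4 * _ * _]mulnA leq_mul2l ratio orbT.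
Qed.

(* The finite checks involve numbers far too large for unary nat, so they are evaluated in
   binary arithmetic and transferred back. *)
Local Notation to_nat := BinNat.N.to_nat.
Local Notation of_nat := BinNat.N.of_nat.

Lemma N_to_nat_le a b : BinNat.N.le a b -> to_nat a <= to_nat b.
Proof.
by move=> le_ab; apply/leP/PeanoNat.Nat.compare_le_iff; rewrite -Nnat.N2Nat.inj_compare.
Qed.

Lemma N_to_nat_lt a b : BinNat.N.lt a b -> to_nat a < to_nat b.
Proof.
by move=> lt_ab; apply/ltP/PeanoNat.Nat.compare_lt_iff; rewrite -Nnat.N2Nat.inj_compare.
Qed.

Lemma N_to_nat_leb a b : BinNat.N.leb a b -> to_nat a <= to_nat b.
Proof. by move/BinNat.N.leb_le; apply: N_to_nat_le. Qed.

Lemma N_to_nat_pow a b : to_nat (BinNat.N.pow a b) = to_nat a ^ to_nat b.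
Proof.
rewrite Nnat.N2Nat.inj_pow; elim: (to_nat b) => // k IHk.
by rewrite expnS -IHk.
Qed.

Lemma N_to_nat_log2 n : to_nat (BinNat.N.log2 n) = lg (to_nat n).
Proof.
case: n => [//|p]; have [lo hi] := BinNat.N.log2_spec (Npos p) (erefl _).
apply/esym/trunc_log_eq => //; apply/andP; split.
  by have := N_to_nat_le lo; rewrite N_to_nat_pow.
by have := N_to_nat_lt hi; rewrite N_to_nat_pow Nnat.N2Nat.inj_succ.
Qed.

Definition lower_step_N (X : N) : N :=
  let T := BinNat.N.sub (BinNat.N.sub (BinNat.N.log2 X) (BinNat.N.log2 (BinNat.N.log2 X)))
             (of_nat 1) in
  BinNat.N.mul T (BinNat.N.sub X (BinNat.N.pow (of_nat 2) T)).

Definition upper_step_N (Y : N) : N :=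
  let S := BinNat.N.add (BinNat.N.add (BinNat.N.log2 Y) (BinNat.N.log2 (BinNat.N.log2 Y)))
             (of_nat 3) in
  BinNat.N.mul (of_nat 2)
    (BinNat.N.add (BinNat.N.mul S (BinNat.N.add Y (of_nat 1))) (of_nat 1)).

Lemma lower_step_N_spec X : to_nat (lower_step_N X) = lower_step (to_nat X).
Proof.
rewrite /lower_step_N Nnat.N2Nat.inj_mul !Nnat.N2Nat.inj_sub N_to_nat_pow.
by rewrite !Nnat.N2Nat.inj_sub !N_to_nat_log2 !Nnat.Nat2N.id.
Qed.

Lemma upper_step_N_spec Y : to_nat (upper_step_N Y) = upper_step (to_nat Y).
Proof.
rewrite /upper_step_N !(Nnat.N2Nat.inj_mul, Nnat.N2Nat.inj_add).
rewrite !N_to_nat_log2 !Nnat.Nat2N.id.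
by rewrite /upper_step /upper_exp !plusE !multE !addn1.
Qed.

Definition lower_seq_N i := iter i lower_step_N (of_nat 886).
Definition upper_seq_N i := iter i upper_step_N (of_nat 886).

Lemma lower_seq_N_spec i : to_nat (lower_seq_N i) = lower_seq i.
Proof. by elim: i => // i IHi; rewrite /lower_seq_N iterS lower_step_N_spec IHi. Qed.

Lemma upper_seq_N_spec i : to_nat (upper_seq_N i) = upper_seq i.
Proof. by elim: i => // i IHi; rewrite /upper_seq_N iterS upper_step_N_spec IHi. Qed.

Lemma N_leb_mul a b c d : BinNat.N.leb (BinNat.N.mul a b) (BinNat.N.mul c d) ->
  to_nat a * to_nat b <= to_nat c * to_nat d.
Proof. by move/N_to_nat_leb; rewrite !Nnat.N2Nat.inj_mul. Qed.

Lemma N_leb_log2 a b :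
  BinNat.N.leb (BinNat.N.mul (of_nat 9) (BinNat.N.succ (BinNat.N.log2 a)))
               (BinNat.N.mul (of_nat 5) (BinNat.N.log2 b)) ->
  9 * (lg (to_nat a)).+1 <= 5 * lg (to_nat b).
Proof. by move/N_leb_mul; rewrite Nnat.N2Nat.inj_succ !N_to_nat_log2 !Nnat.Nat2N.id. Qed.

Lemma N_leb_pow2 a k : BinNat.N.leb (BinNat.N.pow (of_nat 2) (of_nat k)) a -> 2 ^ k <= to_nat a.
Proof. by move/N_to_nat_leb; rewrite N_to_nat_pow !Nnat.Nat2N.id. Qed.

Lemma lower_gap_small c : c <= 14 ->
  qseq (c + 5) * lower_seq c <= 4 * lower_seq c.*2.+3.
Proof.
move=> le14; pose gap_N c := BinNat.N.leb (BinNat.N.mul (upper_seq_N c) (lower_seq_N c))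
                                  (BinNat.N.mul (of_nat 4) (lower_seq_N c.*2.+3)).
have checked : all gap_N (iota 0 15) by vm_compute.
have c_in : c \in iota 0 15 by rewrite mem_iota ltnS le14.
have := N_leb_mul (allP checked c c_in).
rewrite Nnat.Nat2N.id upper_seq_N_spec !lower_seq_N_spec => le_gap.
by apply: leq_trans le_gap; rewrite leq_mul2r qseq_leq_upper_seq orbT.
Qed.

Lemma expn9_leq_of_lg q Y X : q <= Y -> 9 * (lg Y).+1 <= 5 * lg X -> q ^ 9 <= X ^ 5.
Proof.
move=> le_qY le_lg; have X_gt0 : 0 < X by case: X le_lg; rewrite ?trunc_log0 ?muln0.
case: q le_qY => [|q] le_qY; first by rewrite exp0n.
apply: (@leq_trans ((2 ^ (lg Y).+1) ^ 9)).
  by rewrite leq_exp2r // ltnW // (leq_ltn_trans le_qY) ?trunc_log_ltn.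
apply: (@leq_trans ((2 ^ lg X) ^ 5)); last by rewrite leq_exp2r // trunc_logP.
by rewrite -!expnM leq_exp2l // mulnC [_ * 5]mulnC.
Qed.

Lemma lower_pow_base : qseq 19 ^ 9 <= lower_seq 31 ^ 5.
Proof.
have := @N_leb_log2 (upper_seq_N 14) (lower_seq_N 31) (erefl true).
rewrite upper_seq_N_spec lower_seq_N_spec; exact: expn9_leq_of_lg (qseq_leq_upper_seq 14).
Qed.

Lemma lower_seq14_ge : 2 ^ 64 <= lower_seq 14.
Proof. by rewrite -lower_seq_N_spec; apply: N_leb_pow2; vm_compute. Qed.

Lemma lower_invariant c : 14 <= c ->
  [/\ qseq (c + 5) * lower_seq c <= 4 * lower_seq c.*2.+3,
      qseq (c + 5) ^ 9 <= lower_seq c.*2.+3 ^ 5 & 2 ^ 64 <= lower_seq c].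
Proof.
elim: c => [//|c IHc] le14; case: (ltnP c 14) => [lt14 | le14c].
  have -> : c.+1 = 14 by lia.
  by split; [exact: lower_gap_small | exact: lower_pow_base | exact: lower_seq14_ge].
have [gap pow big] := IHc le14c.
have le_Xq := lower_seq_leq_qseq c.
have le4q : 4 <= qseq (c + 5) by rewrite (leq_trans _ (leq_qseq (leq_addl c 5))) ?qseq5.
have le_q' : qseq (c.+1 + 5) <= upper_step (qseq (c + 5)).
  by rewrite addSn addnS qseqSS -addnS double_nth_prime_leq_upper_step.
have step1 : lower_seq c.+1 = lower_step (lower_seq c) by rewrite /lower_seq iterS.
have step2 : lower_seq c.+1.*2.+3 = lower_step (lower_step (lower_seq c.*2.+3)).
  by rewrite doubleS /lower_seq !iterS.
rewrite step1 step2; split.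
- exact: lower_pair_step_mul le_Xq big gap pow le_q'.
- exact: lower_pair_step_pow le_Xq big gap pow le_q'.
- by apply: leq_trans big (leq_lower_step (leq_trans _ big)).
Qed.

Lemma lower_gap c : qseq (c + 5) * lower_seq c <= 4 * lower_seq c.*2.+3.
Proof.
case: (leqP c 14) => [le14 | lt14]; first exact: lower_gap_small.
by have [] := lower_invariant (ltnW lt14).
Qed.

Lemma qseq_mul_leq a b : 0 < b <= a -> qseq a.+1 * qseq b.+1 <= 4 * qseq (a + b).
Proof.
case/andP=> b_gt0 le_ba; case: (leqP 4 b) => [le4b | ltb4].
  move: le_ba; rewrite -(subnK le4b); move: (b - 4) => c le_ca.
  by rewrite -addnS addnA qseq_mul_leq_of_lower_gap ?lower_gap.
have le_qa : qseq b.+1 <= qseq a.+1 by apply: leq_qseq.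
case: b b_gt0 le_ba ltb4 le_qa => [//|[|[|[|b]]]] _ le_ba ltb4 le_qa; last by [].
- by rewrite qseq2 addn1 mulnC.
- rewrite qseq3 addn2 qseqSS in le_qa *.
  have := double_leq_nth_prime (qseq a.+1); lia.
- rewrite qseq4 addn3 [qseq a.+3]qseqSS [qseq a.+2]qseqSS in le_qa *.
  set x := qseq a.+1 in le_qa *; set y := nth_prime x.
  have le_y : 443 <= y by rewrite -(nth_prime_pi (isT : prime 443)); apply: leq_nth_prime.
  have := double_leq_nth_prime x; have := nth_prime_lower 6 (2 * y); rewrite -/y; lia.
Qed.

Lemma nth_prime_qseq_mul a b : 0 < a -> 0 < b ->
  nth_prime (qseq a) * nth_prime (qseq b) <= qseq (a + b).
Proof.
wlog le_ba : a b / b <= a.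
  move=> le_wlog a_gt0 b_gt0; case: (leqP b a) => [le_ba | /ltnW le_ab]; first exact: le_wlog.
  by rewrite mulnC addnC; apply: le_wlog.
case: a le_ba => // a; case: b => // b le_ba _ _.
have := @qseq_mul_leq a.+1 b.+1; rewrite ltnS le_ba !qseqSS => /(_ isT).
by rewrite mulnACA -[2 * 2]/4 leq_pmul2l.
Qed.

Lemma prod_nth_prime_qseq (l : seq nat) : all (leq 1) l -> 2 <= size l ->
  \prod_(x <- l) nth_prime (qseq x) <= qseq (sumn l).
Proof.
elim: l => [//|x l IHl] /= /andP[x_gt0 l_pos] size_l; rewrite big_cons.
case: l IHl l_pos size_l => [//|y l] IHl l_pos _.
have sum_gt0 : 0 < sumn (y :: l) by case/andP: l_pos => /= y_gt0 _; rewrite ltn_addr.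
apply: leq_trans (nth_prime_qseq_mul x_gt0 sum_gt0); rewrite leq_mul2l; apply/orP; right.
case: l IHl l_pos {sum_gt0} => [|z l] IHl l_pos; first by rewrite big_seq1 /= addn0.
exact: leq_trans (IHl l_pos isT) (ltnW (ltn_nth_prime_id _)).
Qed.

Lemma tree_ind (P : tree -> Prop) :
  (forall ts, List.Forall P ts -> P (Node ts)) -> forall t, P t.
Proof.
move=> IH; fix tree_ind 1 => -[ts]; apply: IH.
by elim: ts => [|t ts IHts]; constructor.
Qed.

Lemma matula_Node ts : matula (Node ts) = \prod_(t <- ts) nth_prime (matula t).
Proof. by elim: ts => [|t ts IHts]; rewrite ?big_nil // big_cons -IHts. Qed.

Lemma leaves_Node t ts : leaves (Node (t :: ts)) = \sum_(u <- t :: ts) leaves u.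
Proof.
rewrite /= big_cons; congr (_ + _).
by elim: ts => [|u ts /= ->]; rewrite ?big_nil ?big_cons.
Qed.

Lemma topological_Node ts : topological (Node ts) = (size ts != 1) && all topological ts.
Proof. by rewrite /=; congr (_ && _); elim: ts => //= t ts ->. Qed.

Lemma leaves_gt0 t : 0 < leaves t.
Proof.
elim/tree_ind: t => -[//|t ts] /List.Forall_cons_iff[t_gt0 _].
by rewrite leaves_Node big_cons ltn_addr.
Qed.

Lemma matula_leq_qseq T : topological T -> matula T <= qseq (leaves T).
Proof.
elim/tree_ind: T => ts IH; rewrite topological_Node => /andP[size_ts top_ts].
case: ts IH size_ts top_ts => [//|t ts] IH size_ts top_ts.
rewrite matula_Node leaves_Node.
apply: (@leq_trans (\prod_(u <- t :: ts) nth_prime (qseq (leaves u)))).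
  elim: (t :: ts) IH top_ts => [|u us IHus]; first by rewrite !big_nil.
  move=> /List.Forall_cons_iff[IHu IH_us] /andP[top_u top_us]; rewrite !big_cons.
  by apply: leq_mul; [apply: leq_nth_prime; exact: IHu | exact: IHus IH_us top_us].
rewrite -(big_map leaves xpredT (fun x => nth_prime (qseq x))).
rewrite -(big_map leaves xpredT id) -sumnE; apply: prod_nth_prime_qseq.
  by elim: (t :: ts) {IH top_ts size_ts} => //= u us ->; rewrite andbT leaves_gt0.
by rewrite size_map; case: ts size_ts {IH top_ts}.
Qed.

Lemma caterpillar_spec n : 1 <= n ->
  [/\ binary (caterpillar n), topological (caterpillar n),
      leaves (caterpillar n) = n & matula (caterpillar n) = qseq n].
Proof.
elim: n => [//|[|n] IHn _]; first by split.
have [bin top lv mat] := IHn isT.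
have -> : caterpillar n.+2 = Node [:: K1; caterpillar n.+1] by [].
split; [by rewrite /= bin | by rewrite /= top | by rewrite /= lv addn0 |].
by rewrite matula_Node big_cons big_seq1 mat -[matula K1]/1 nth_prime1.
Qed.

Theorem mainTheorem3 (n : nat) : 1 <= n ->
  [/\ binary (caterpillar n), topological (caterpillar n),
      leaves (caterpillar n) = n,
      (forall T : tree, topological T -> leaves T = n ->
         matula T <= matula (caterpillar n))
    & matula (caterpillar n) = qseq n].
Proof.
move=> n_gt0; have [bin top lv mat] := caterpillar_spec n_gt0.
split=> // T top_T leaves_T; rewrite mat -leaves_T; exact: matula_leq_qseq.
Qed.
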